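(* Assume $\mu p<1$ and $q\neq \mu p$, and consider the model on the infinite Galton–Watson tree with the information starting at the vertex $x$ at distance $r\ge 0$ from the root. Then $$ P_r (\operatorname{diam} (\mathscr{C}) \geq 2n) \leq \frac{1 - (q / \mu p)^{r + 1}}{1 - (q / \mu p)} \, (\mu p)^n \quad \text{for all integers } n > r. $$
   Context: Let $(p_k)_{k\ge 0}$ be an offspring distribution with $p_0=0$ and finite mean $\mu=\sum_k kp_k$. Let $\mathbb{T}$ be a Galton–Watson tree with root $0$ and offspring distribution $(p_k)$. Fix $p,q\in(0,1)$. Each edge of the tree is replaced by two arrows: the arrow parent $\to$ offspring is open with probability $p$ and the arrow offspring $\to$ parent is open with probability $q$, all arrows independently of each other and of the tree. The source of the information is a vertex $x$ at distance $r$ from the root chosen independently of the offspring numbers of its ancestors and of the percolation (e.g. the vertex obtained from the root by always moving to the first offspring). The cluster is $\mathscr{C}=\{y: \text{there is a directed open path from } x \text{ to } y\}$ (including $x$). Its diameter is $\operatorname{diam}(\mathscr{C})=\max\{d(y,z): y,z\in\mathscr{C}\}$, where $d$ is the graph distance in the tree. $P_r$ denotes probability over both the tree and the percolation when the source is at distance $r$ from the root. *)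

From HB Require Import structures.
From mathcomp Require Import all_boot all_order all_algebra.
From mathcomp Require Import all_classical all_reals all_analysis.
From Stdlib Require Import Relations.
Set Implicit Arguments. Unset Strict Implicit. Unset Printing Implicit Defensive.
Import Order.TTheory GRing.Theory Num.Theory.

(* Vertices of the Ulam-Harris universe: words [:: i1; ...; ik], the root is
   [::], the children of u are (rcons u i), i = 0, 1, 2, ...                *)

(* Labels of the basic random variables:
   (tag 0, w) : number of offspring of vertex w;
   (tag 1, w) : state (1 = open) of the arrow parent(w) -> w;
   (tag 2, w) : state (1 = open) of the arrow w -> parent(w).               *)
Definition gw_label := ('I_3 * seq nat)%type.
Definition Off (w : seq nat) : gw_label := (@Ordinal 3 0 isT, w).
Definition Dn  (w : seq nat) : gw_label := (@Ordinal 3 1 isT, w).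
Definition Up  (w : seq nat) : gw_label := (@Ordinal 3 2 isT, w).

Definition gw_open_arrow (N : seq nat -> nat) (D U : seq nat -> bool)
    (u v : seq nat) : Prop :=
  (exists i, v = rcons u i /\ (i < N u)%N /\ D v) \/
  (exists i, u = rcons v i /\ (i < N v)%N /\ U u).

Definition gw_cluster (N : seq nat -> nat) (D U : seq nat -> bool)
    (x : seq nat) : set (seq nat) :=
  fun y => clos_refl_trans (seq nat) (gw_open_arrow N D U) x y.

Fixpoint gw_lcp (y z : seq nat) : nat :=
  match y, z with
  | a :: y', b :: z' => if a == b then (gw_lcp y' z').+1 else 0%N
  | _, _ => 0%N
  end.

Definition gw_dist (y z : seq nat) : nat := (size y + size z - 2 * gw_lcp y z)%N.

(* diam(C) >= m, with diam(C) = max {d(y,z) : y, z in C} (possibly infinite) *)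
Definition diam_ge (C : set (seq nat)) (m : nat) : Prop :=
  exists y z, C y /\ C z /\ (m <= gw_dist y z)%N.

Arguments diam_ge : clear scopes.

(* the gw_source: distance r from the root, reached by always moving to the
   first offspring *)
Definition gw_source (r : nat) : seq nat := nseq r 0%N.

Local Open Scope classical_set_scope.
Local Open Scope ereal_scope.
Definition mutually_independent {d} {T : measurableType d} {R : realType}
    (P : probability T R) (I : eqType) (X : I -> T -> nat) : Prop :=
  forall (J : seq I) (A : I -> set nat), uniq J ->
    P (\bigcap_(i in [set i | i \in J]) (X i @^-1` A i)) =
    \prod_(i <- J) P (X i @^-1` A i).

From HB Require Import structures.
From mathcomp Require Import all_boot all_order all_algebra.
From mathcomp Require Import all_classical all_reals all_analysis.
From mathcomp Require Import zify ring.
From Stdlib Require Import Relations.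
Import Order.TTheory GRing.Theory Num.Theory numFieldNormedType.Exports.
Set Implicit Arguments. Unset Strict Implicit. Unset Printing Implicit Defensive.

(* A directed open path from the
   source 0^r can only climb k <= r open up-arrows along the ancestral line,
   to 0^(r-k), and then descend along open down-arrows.  Two such vertices
   are at distance at most k1 + |s1| + k2 + |s2|, so a cluster of diameter
   >= 2n > 2r contains, for some k <= r, an open climb of length k followed by
   an open descent of length n - k (diam_long_descent).

   By induction on m, splitting on the
   number of children of v, an open descent of length m from v has
   probability at most (mu p)^m, even intersected with a cylinder event built
   from variables outside the subtree of v (first_moment).  A climb of length
   k has probability q^k and involves only up-arrows, so a union bound over
   k <= r (diam_bound) yields sum_(k<=r) q^k (mu p)^(n-k), which is the
   geometric sum of the statement (geometric_sum_ratio).  The bound only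
   uses independence, the marginals of the variables and the mean mu. *)

Section ReflTransPaths.
Variables (A : Type) (Rel : relation A).

Fixpoint rel_path (x : A) (l : seq A) : Prop :=
  if l is v :: l' then Rel x v /\ rel_path v l' else True.

(* Reachability is the existence of an explicit path; this makes the
   cluster a countable union of finite-dimensional events. *)
Lemma clos_rt_pathP x y :
  clos_refl_trans A Rel x y <-> exists2 l, rel_path x l & last x l = y.
Proof.
split.
  move/clos_rt_rt1n_iff; elim=> [z|x0 y0 z Rxy _ [l Pl El]]; first by exists [::].
  by exists (y0 :: l).
case=> l; elim: l x => [|v l IH] x /= Pl El; first by rewrite -El; apply: rt_refl.
by apply: rt_trans (IH v (proj2 Pl) El); apply: rt_step; case: Pl.
Qed.

End ReflTransPaths.

Section ClusterShape.
Variables (N : seq nat -> nat) (D U : seq nat -> bool).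

Fixpoint open_descent (v s : seq nat) : Prop :=
  if s is i :: s' then (i < N v)%N /\ D (rcons v i) /\ open_descent (rcons v i) s'
  else True.

Lemma open_descent_cat v s1 s2 :
  open_descent v (s1 ++ s2) <-> open_descent v s1 /\ open_descent (v ++ s1) s2.
Proof.
elim: s1 v => [|i s1 IH] v /=; first by rewrite cats0; tauto.
by rewrite IH -cat_rcons; tauto.
Qed.

Definition open_climb (r k : nat) : Prop :=
  forall i, (i < k)%N -> U (nseq (r - i) 0%N).

(* A directed open path from the source can only climb along the ancestral
   line and then descend: once it went down it cannot go up again, since the
   only up-arrow out of a vertex leads back to where it came from. *)
Definition climb_then_descend (r : nat) (y : seq nat) : Prop :=
  exists k s, [/\ (k <= r)%N, open_climb r k, y = nseq (r - k) 0%N ++ s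
                & open_descent (nseq (r - k) 0%N) s].

Lemma cluster_climb_then_descend r y :
  gw_cluster N D U (gw_source r) y -> climb_then_descend r y.
Proof.
move/clos_rt_rtn1_iff; elim=> [|y0 z Hyz _ [k [s [kr climb Ey desc]]]].
  by exists 0%N, [::]; rewrite subn0 cats0.
subst y0; case: Hyz => [[i [-> [iN Dz]]]|[i [Hy [iN Uy]]]].
  exists k, (rcons s i); split=> //; first by rewrite rcons_cat.
  by rewrite -cats1; apply/open_descent_cat.
case/lastP: s Hy Uy desc => [|s j] Hy Uy desc; last first.
  rewrite -rcons_cat in Hy; have [<- _] := rcons_inj Hy.
  by exists k, s; split=> //; move: desc; rewrite -cats1 => /open_descent_cat [].
(* the last step climbs one more up-arrow of the ancestral line *)
rewrite cats0 in Hy Uy; case E: (r - k)%N Hy => [|m] Hy.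
  by have := size_rcons z i; rewrite -Hy.
rewrite -[m.+1]addn1 nseqD cats1 in Hy; have [Hz _] := rcons_inj Hy.
exists k.+1, [::]; split; [lia| |by rewrite cats0 -Hz; congr nseq; lia|by []].
by move=> i'; rewrite ltnS leq_eqVlt => /orP[/eqP ->|]; [exact: Uy|exact: climb].
Qed.

Lemma lcp_nseq a b u v :
  (minn a b <= gw_lcp (nseq a 0%N ++ u) (nseq b 0%N ++ v))%N.
Proof. by elim: a b => [|a IH] [|b] //=; rewrite minnSS ltnS. Qed.

(* A cluster of diameter at least 2n > 2r contains an open climb of some
   length k <= r followed by an open descent of length n - k: of the two
   vertices realising the diameter, one has k + |s| >= n. *)
Lemma diam_long_descent r n : (r < n)%N ->
  diam_ge (gw_cluster N D U (gw_source r)) (2 * n) ->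
  exists k, [/\ (k <= r)%N, open_climb r k &
    exists2 s, size s = (n - k)%N & open_descent (nseq (r - k) 0%N) s].
Proof.
move=> rn [y [z [/cluster_climb_then_descend [k1 [s1 [k1r c1 Ey d1]]]
               [/cluster_climb_then_descend [k2 [s2 [k2r c2 Ez d2]]] Hd]]]].
have Hl := lcp_nseq (r - k1) (r - k2) s1 s2.
move: Hd; rewrite /gw_dist Ey Ez !size_cat !size_nseq => Hd.
have truncate k s : (n <= k + size s)%N ->
    open_descent (nseq (r - k) 0%N) s ->
    exists2 s', size s' = (n - k)%N & open_descent (nseq (r - k) 0%N) s'.
  move=> long; rewrite -(cat_take_drop (n - k) s) => /open_descent_cat [ds _].
  by exists (take (n - k) s); rewrite ?size_take //; case: ltnP; lia.
have [long|long] : (n <= k1 + size s1)%N \/ (n <= k2 + size s2)%N by lia.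
- by exists k1; split=> //; exact: (truncate k1 s1).
- by exists k2; split=> //; exact: (truncate k2 s2).
Qed.

End ClusterShape.

Local Open Scope classical_set_scope.
Local Open Scope ring_scope.

Section Measurability.
Context {d : measure_display} {T : measurableType d}.

Lemma measurable_prop (Q : Prop) : measurable [set _ : T | Q].
Proof.
case: (pselect Q) => HQ; first by rewrite (propT HQ); exact: measurableT.
by rewrite (propF HQ); exact: measurable0.
Qed.

Lemma measurable_exists (A : countType) (E : A -> T -> Prop) :
  (forall a, measurable [set t | E a t]) -> measurable [set t | exists a, E a t].
Proof.
move=> mE; have -> : [set t | exists a, E a t] = \bigcup_a [set t | E a t].
  by apply/seteqP; split=> t /= [a]; exists a.
exact: countable_bigcupT_measurable (countableP _) mE.
Qed.

Lemma measurable_clos_rt (A : countType) (Rel : T -> relation A) x y :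
  (forall u v, measurable [set t | Rel t u v]) ->
  measurable [set t | clos_refl_trans A (Rel t) x y].
Proof.
move=> mRel; have -> : [set t | clos_refl_trans A (Rel t) x y] =
    [set t | exists l, rel_path (Rel t) x l /\ last x l = y].
  apply/seteqP; split=> t /=; first by case/clos_rt_pathP=> l Pl El; exists l.
  by case=> l [Pl El]; apply/clos_rt_pathP; exists l.
apply: measurable_exists => l; apply: measurableI; last exact: measurable_prop.
elim: l x => [|v l IH] x /=; first exact: measurableT.
exact: (measurableI _ _ (mRel x v) (IH v)).
Qed.

Variable X : gw_label -> T -> nat.
Hypothesis mX : forall l (A : set nat), measurable (X l @^-1` A).

Definition nchildren (t : T) (w : seq nat) : nat := X (Off w) t.
Definition down_open (t : T) (w : seq nat) : bool := X (Dn w) t == 1%N.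
Definition up_open (t : T) (w : seq nat) : bool := X (Up w) t == 1%N.

Lemma measurable_open_arrow u v :
  measurable [set t | gw_open_arrow (nchildren t) (down_open t) (up_open t) u v].
Proof.
have mopen l : measurable [set t | X l t == 1%N].
  have -> : [set t | X l t == 1%N] = X l @^-1` [set 1%N].
    by apply/seteqP; split=> t /= /eqP.
  exact: mX.
apply: measurableU; apply: measurable_exists => i;
  (apply: measurableI; first exact: measurable_prop);
  (apply: measurableI; [exact: (mX _ [set j | (i < j)%N]) | exact: mopen]).
Qed.

Lemma measurable_diam x m :
  measurable [set t | diam_ge (gw_cluster (nchildren t) (down_open t) (up_open t) x) m].
Proof.
have mcl y : measurable [set t | gw_cluster (nchildren t) (down_open t) (up_open t) x y].
  exact/measurable_clos_rt/measurable_open_arrow.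
apply: measurable_exists => y; apply: measurable_exists => z.
apply: measurableI; first exact: mcl.
by apply: measurableI; [exact: mcl | exact: measurable_prop].
Qed.

End Measurability.

Lemma eseries_EFin (R : realType) (f : nat -> R) (l : R) :
  series f @ \oo --> l -> (\sum_(k <oo) (f k)%:E = l%:E)%E.
Proof.
move=> Hf; apply: cvg_lim => //.
apply: cvg_EFin; first by near=> n; rewrite sumEFin.
apply: (cvg_trans _ Hf); apply: near_eq_cvg; near=> n.
by rewrite /= sumEFin.
Unshelve. all: by end_near.
Qed.

Section FirstMoment.
Context {R : realType} {d : measure_display} {T : measurableType d}.
Variables (P : probability T R) (X : gw_label -> T -> nat).
Variables (pk : nat -> R) (mu p : R).
Hypothesis mX : forall l (A : set nat), measurable (X l @^-1` A).
Hypothesis indepX : mutually_independent P X.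
Hypothesis P_off : forall w k, P (X (Off w) @^-1` [set k]) = (pk k)%:E.
Hypothesis P_dn : forall w, P (X (Dn w) @^-1` [set 1%N]) = p%:E.
Hypothesis mean_mu : [series k%:R * pk k]_k @ \oo --> mu.

Definition cylinder (J : seq gw_label) (B : gw_label -> set nat) : set T :=
  \bigcap_(l in [set l | l \in J]) X l @^-1` B l.

Lemma cylinder_cons a J B : cylinder (a :: J) B = X a @^-1` B a `&` cylinder J B.
Proof.
apply/seteqP; split=> t /=.
  move=> Ht; split; first by apply: Ht; rewrite /= mem_head.
  by move=> l /= lJ; apply: Ht; rewrite /= in_cons lJ orbT.
by case=> Ha HJ l /=; rewrite in_cons => /orP[/eqP -> //|lJ]; exact: HJ.
Qed.

Lemma measurable_cylinder J B : measurable (cylinder J B).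
Proof.
elim: J => [|a J IH]; last by rewrite cylinder_cons; exact: measurableI.
by have -> : cylinder [::] B = setT by apply/seteqP; split=> t // _ l.
Qed.

Lemma cylinder_ext J B B' : {in J, B =1 B'} -> cylinder J B = cylinder J B'.
Proof.
by move=> BB'; apply/seteqP; split=> t /= Ht l /= lJ; [rewrite -BB'|rewrite BB'];
  rewrite //; exact: Ht.
Qed.

Lemma probability_fine (A : set T) : measurable A -> P A = (fine (P A))%:E.
Proof. by move=> mA; rewrite fineK ?fin_num_measure. Qed.

Lemma P_cylinder J B : uniq J -> P (cylinder J B) = (\prod_(l <- J) P (X l @^-1` B l))%E.
Proof. exact: indepX. Qed.

Fixpoint descent_event (v : seq nat) (m : nat) : set T :=
  if m is m'.+1 then
    \bigcup_(k in [set: nat]) (X (Off v) @^-1` [set k] `&`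
      \big[setU/set0]_(i < k)
        (X (Dn (rcons v i)) @^-1` [set 1%N] `&` descent_event (rcons v i) m'))
  else setT.

Lemma measurable_descent_event v m : measurable (descent_event v m).
Proof.
elim: m v => [|m IH] v /=; first exact: measurableT.
apply: bigcupT_measurable => k; apply: measurableI => //.
by apply: bigsetU_measurable => i _; apply: measurableI.
Qed.

Definition child_descent (v : seq nat) (m i : nat) : set T :=
  X (Dn (rcons v i)) @^-1` [set 1%N] `&` descent_event (rcons v i) m.

Lemma measurable_child_descent v m i : measurable (child_descent v m i).
Proof. by apply: measurableI => //; exact: measurable_descent_event. Qed.

Lemma open_descent_event t v s :
  open_descent (nchildren X t) (down_open X t) v s -> descent_event v (size s) t.
Proof.
elim: s v => [|i s IH] v //= [iN [Dv Hs]].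
exists (nchildren X t v) => //; split=> //.
apply: (bigsetU_sup (F := child_descent v (size s)) iN).
by split; [exact/eqP | exact: IH].
Qed.

(* [below v l]: the event descent_event v _ may depend on the variable l,
   i.e. l is the offspring number of a vertex of the subtree of v, or the
   state of a down-arrow into a strict descendant of v. *)
Definition below (v : seq nat) (l : gw_label) : bool :=
  prefix v l.2 && ((val l.1 == 0%N) || ((val l.1 == 1%N) && (size v < size l.2)%N)).

Definition first_moment_bound (m : nat) : Prop :=
  forall v J B, uniq J -> (forall l, l \in J -> ~~ below v l) ->
  (P (cylinder J B `&` descent_event v m) <= P (cylinder J B) * ((mu * p) ^+ m)%:E)%E.

Lemma below_child v i J : (forall l, l \in J -> ~~ below v l) ->
  forall l, l \in [:: Dn (rcons v i), Off v & J] -> ~~ below (rcons v i) l.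
Proof.
move=> JnotB l; rewrite !in_cons => /orP[/eqP->|/orP[/eqP->|lJ]].
- by rewrite /below /= ltnn andbF.
- apply/negP => /andP[/prefixP [s Es] _].
  by have := congr1 size Es; rewrite /= size_cat size_rcons; lia.
- apply: contra (JnotB l lJ) => /andP[vil Hl].
  rewrite /below (prefix_trans (prefix_rcons v i) vil) /=.
  by case/orP: Hl => [->//|/andP[-> Hs]]; rewrite size_rcons in Hs; lia.
Qed.

(* One term of the first-generation decomposition: v has k children and the
   child v i descends; the three events N(v) = k, D(v i) = 1 and the descent
   from v i are independent of each other and of the cylinder. *)
Lemma child_term_bound m v J B k i : first_moment_bound m ->
  uniq J -> (forall l, l \in J -> ~~ below v l) ->
  (P (cylinder J B `&` X (Off v) @^-1` [set k] `&` child_descent v m i)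
   <= (p * (pk k * fine (P (cylinder J B))) * (mu * p) ^+ m)%:E)%E.
Proof.
move=> IH uJ JnotB; set w := rcons v i.
have dn_notin : Dn w \notin J.
  by apply/negP => /JnotB; rewrite /below /= prefix_rcons /= size_rcons ltnSn.
have off_notin : Off v \notin J by apply/negP => /JnotB; rewrite /below /= prefix_refl.
pose B' l := if l == Dn w then [set 1%N] else if l == Off v then [set k] else B l.
have BB' : {in J, B' =1 B}.
  move=> l lJ; rewrite /B'; case: eqP => [El|_]; first by move: dn_notin; rewrite -El lJ.
  by case: eqP => [El|//]; move: off_notin; rewrite -El lJ.
have uJ' : uniq [:: Dn w, Off v & J] by rewrite /= in_cons negb_or dn_notin off_notin uJ.
have -> : cylinder J B `&` X (Off v) @^-1` [set k] `&` child_descent v m i =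
    cylinder [:: Dn w, Off v & J] B' `&` descent_event w m.
  rewrite /child_descent !cylinder_cons (cylinder_ext BB') /B' /= !eqxx.
  by apply/seteqP; split=> t /=; tauto.
apply: (le_trans (IH w _ B' uJ' (below_child JnotB))).
rewrite P_cylinder // !big_cons /B' /= !eqxx P_dn P_off.
rewrite (eq_big_seq (fun l => P (X l @^-1` B l))); last by move=> l /BB'; rewrite /B' => ->.
have PC := probability_fine (measurable_cylinder J B).
rewrite -P_cylinder //; set c := fine _ in PC *.
by rewrite PC -!EFinM lee_fin le_eqVlt; apply/orP; left; apply/eqP; ring.
Qed.

Lemma offspring_term_bound m v J B k : first_moment_bound m ->
  uniq J -> (forall l, l \in J -> ~~ below v l) ->
  (P (cylinder J B `&` (X (Off v) @^-1` [set k] `&`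
        \big[setU/set0]_(i < k) child_descent v m i))
   <= ((k%:R * pk k) * (p * fine (P (cylinder J B)) * (mu * p) ^+ m))%:E)%E.
Proof.
move=> IH uJ JnotB; set C := cylinder J B.
pose H i := C `&` X (Off v) @^-1` [set k] `&` child_descent v m i.
apply: (le_trans (@content_subadditive _ _ _ P _ H k _ _ _)).
- move=> i _; apply: measurableI; last exact: measurable_child_descent.
  by apply: measurableI => //; exact: measurable_cylinder.
- apply: measurableI; first exact: measurable_cylinder.
  by apply: measurableI => //; apply: bigsetU_measurable => i _; exact: measurable_child_descent.
- move=> t [Ct [Ok]]; rewrite -bigcup_mkord => -[i ik Si].
  exact: (bigsetU_sup (F := H) ik).
apply: le_trans; first by apply: lee_sum => i _; exact: child_term_bound.
rewrite sumEFin sumr_const card_ord lee_fin le_eqVlt; apply/orP; left; apply/eqP.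
by ring.
Qed.

Lemma first_moment_step m : first_moment_bound m -> first_moment_bound m.+1.
Proof.
move=> IH v J B uJ JnotB.
set C := cylinder J B; have mC : measurable C := measurable_cylinder J B.
have PC := probability_fine mC; set c := fine (P C) in PC.
set cm := p * c * (mu * p) ^+ m.
pose F k := C `&` (X (Off v) @^-1` [set k] `&` \big[setU/set0]_(i < k) child_descent v m i).
have mF k : measurable (F k).
  apply: measurableI => //; apply: measurableI => //.
  by apply: bigsetU_measurable => i _; exact: measurable_child_descent.
apply: (le_trans (measure_sigma_subadditive (F := F) _ mF _ _)).
- by apply: measurableI => //; exact: measurable_descent_event.
- by move=> t [Ct [k _ Hk]]; exists k.
apply: le_trans.
  apply: lee_nneseries => [k _ _|k _]; first exact: measure_ge0.
  exact: offspring_term_bound.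
rewrite (@eseries_EFin _ _ (mu * cm)).
  rewrite PC -EFinM lee_fin le_eqVlt; apply/orP; left; apply/eqP.
  by rewrite /cm exprS; ring.
have -> : series (fun k => k%:R * pk k * cm) =
    (fun n => series (fun k => k%:R * pk k) n * cm).
  by apply/funext => n; rewrite /series /= big_distrl.
exact: cvgM mean_mu (cvg_cst _).
Qed.

Lemma first_moment m : first_moment_bound m.
Proof.
elim: m => [|m /first_moment_step //] v J B _ _.
by rewrite /= setIT expr0 mule1.
Qed.

End FirstMoment.

(* The bound of the theorem is the geometric sum over the climb length k. *)
Lemma geometric_sum_ratio (R : fieldType) (q x : R) (r n : nat) :
  q != x -> (r < n)%N ->
  \sum_(k < r.+1) q ^+ k * x ^+ (n - k) = (1 - (q / x) ^+ r.+1) / (1 - q / x) * x ^+ n.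
Proof.
move=> qx rn; have [->|x0] := eqVneq x 0.
  rewrite expr0n eqn0Ngt (leq_ltn_trans (leq0n r) rn) mulr0.
  by rewrite big1 // => k _; rewrite expr0n subn_eq0 leqNgt (leq_trans (ltn_ord k) rn) mulr0.
set t := q / x.
have t1 : 1 - t != 0.
  rewrite subr_eq0 eq_sym; apply: contra qx => /eqP t_eq1.
  by rewrite -(divfK x0 q) -/t t_eq1 mul1r.
have -> : \sum_(k < r.+1) q ^+ k * x ^+ (n - k) = (\sum_(k < r.+1) t ^+ k) * x ^+ n.
  rewrite big_distrl; apply: eq_bigr => k _ /=.
  have kn : (k <= n)%N by have := ltn_ord k; lia.
  have xk : x ^+ k != 0 by apply: expf_neq0.
  by rewrite /t exprMn exprVn -{2}(subnK kn) exprD; field.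
have -> : 1 - t ^+ r.+1 = (1 - t) * \sum_(k < r.+1) t ^+ k.
  by rewrite -opprB subrX1 -mulNr opprB.
by rewrite [(1 - t) * _]mulrC mulfK.
Qed.

Section UnionBound.
Context {R : realType} {d : measure_display} {T : measurableType d}.
Variables (P : probability T R) (X : gw_label -> T -> nat) (q : R) (r n : nat).
Hypothesis mX : forall l (A : set nat), measurable (X l @^-1` A).
Hypothesis indepX : mutually_independent P X.
Hypothesis P_up : forall w, P (X (Up w) @^-1` [set 1%N]) = q%:E.

Definition climb_labels (k : nat) : seq gw_label :=
  [seq Up (nseq (r - i) 0%N) | i <- iota 0 k].

Lemma climb_labels_uniq k : (k <= r)%N -> uniq (climb_labels k).
Proof.
move=> kr; rewrite map_inj_in_uniq ?iota_uniq // => i j.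
rewrite !mem_iota !add0n => /andP[_ ik] /andP[_ jk] [] /(congr1 size).
by rewrite !size_nseq; lia.
Qed.

Lemma climb_labels_not_below k v l : l \in climb_labels k -> ~~ below v l.
Proof. by case/mapP=> i _ ->; rewrite /below /= andbF. Qed.

Lemma P_climb k : (k <= r)%N ->
  P (cylinder X (climb_labels k) (fun=> [set 1%N])) = (q ^+ k)%:E.
Proof.
move=> kr; rewrite P_cylinder ?climb_labels_uniq // big_map.
rewrite (eq_bigr (fun _ => q%:E)) => [|i _]; last exact: P_up.
by rewrite prodEFin -[in iota 0 k](subn0 k) prodr_const_nat subn0.
Qed.

Definition climb_descent_event (k : nat) : set T :=
  cylinder X (climb_labels k) (fun=> [set 1%N]) `&`
  descent_event X (nseq (r - k) 0%N) (n - k).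

Lemma measurable_climb_descent_event k : measurable (climb_descent_event k).
Proof.
by apply: measurableI; [exact: measurable_cylinder | exact: measurable_descent_event].
Qed.

Lemma diam_event_sub : (r < n)%N ->
  [set t | diam_ge (gw_cluster (nchildren X t) (down_open X t) (up_open X t) (gw_source r))
                   (2 * n)%N] `<=` \big[setU/set0]_(k < r.+1) climb_descent_event k.
Proof.
move=> rn t /(diam_long_descent rn) [k [kr climb [s size_s desc]]].
apply: (bigsetU_sup (F := climb_descent_event) (_ : (k < r.+1)%N)) => //.
split; last by rewrite -size_s; exact: open_descent_event.
move=> l /= /mapP [i]; rewrite mem_iota add0n => /andP[_ ik] ->.
exact/eqP/climb.
Qed.

Lemma diam_bound (pk : nat -> R) (mu p : R) :
  (forall w k, P (X (Off w) @^-1` [set k]) = (pk k)%:E) ->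
  (forall w, P (X (Dn w) @^-1` [set 1%N]) = p%:E) ->
  [series k%:R * pk k]_k @ \oo --> mu -> (r < n)%N ->
  (P [set t | diam_ge (gw_cluster (nchildren X t) (down_open X t) (up_open X t) (gw_source r))
                   (2 * n)%N]
   <= (\sum_(k < r.+1) q ^+ k * (mu * p) ^+ (n - k))%:E)%E.
Proof.
move=> P_off P_dn mean_mu rn.
apply: (le_trans (content_subadditive P (fun k _ => measurable_climb_descent_event k)
  (measurable_diam mX _ _) (diam_event_sub rn))).
rewrite -sumEFin; apply: lee_sum => k _.
have kr : (k <= r)%N by have := ltn_ord k; lia.
apply: (le_trans (first_moment mX indepX P_off P_dn mean_mu (n - k) (fun=> [set 1%N])
  (climb_labels_uniq kr) (@climb_labels_not_below k _))).
by rewrite P_climb // -EFinM.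
Qed.

End UnionBound.

Theorem theorem3 (R : realType) (d : measure_display) (T : measurableType d)
  (P : probability T R) (X : gw_label -> T -> nat)
  (pk : nat -> R) (mu p q : R) (r n : nat) :
  (* offspring distribution: p_0 = 0, finite mean mu *)
  (forall k, 0 <= pk k) ->
  pk 0%N = 0 ->
  series pk @ \oo --> (1 : R) ->
  [series k%:R * pk k]_k @ \oo --> mu ->
  0 < p < 1 -> 0 < q < 1 ->
  (* the basic random variables *)
  (forall l (A : set nat), measurable (X l @^-1` A)) ->
  mutually_independent P X ->
  (forall w k, P (X (Off w) @^-1` [set k]) = (pk k)%:E) ->
  (forall w, P (X (Dn w) @^-1` [set 1%N]) = p%:E) ->
  (forall w, P (X (Dn w) @^-1` [set 0%N]) = (1 - p)%:E) ->
  (forall w, P (X (Up w) @^-1` [set 1%N]) = q%:E) ->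
  (forall w, P (X (Up w) @^-1` [set 0%N]) = (1 - q)%:E) ->
  (* hypotheses of the theorem *)
  mu * p < 1 -> q != mu * p -> (r < n)%N ->
  (P [set t | diam_ge
        (gw_cluster (fun w : seq nat => X (Off w) t) (fun w : seq nat => X (Dn w) t == 1%N)
                 (fun w : seq nat => X (Up w) t == 1%N) (gw_source r))
        (2 * n)%N]
  <= ((1 - (q / (mu * p)) ^+ r.+1) / (1 - q / (mu * p)) * (mu * p) ^+ n)%:E)%E.
Proof.
move=> _ _ _ mean_mu _ _ mX indepX P_off P_dn _ P_up _ _ q_neq rn.
rewrite -geometric_sum_ratio //.
exact: (diam_bound mX indepX P_up P_off P_dn mean_mu rn).
Qed.
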